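(* (i) The variety of idempotent semirings satisfying $x+xyx\approx x$ equals $\mathbf{Rect}^{\bullet}\circ(\mathbf{LZ}^{+}\circ\mathbf{D})$. (ii) The variety of idempotent semirings satisfying $xyx+x\approx x$ equals $\mathbf{Rect}^{\bullet}\circ(\mathbf{RZ}^{+}\circ\mathbf{D})$.
   Context: An idempotent semiring is an algebra $(S,+,\cdot)$ with $(S,+)$, $(S,\cdot)$ bands and both distributive laws; addition not assumed commutative. $\mathbf{Rect}^{\bullet}$ is the variety of idempotent semirings satisfying $xyx\approx x$. $\mathbf{D}$ is the variety of distributive lattices (idempotent semirings satisfying $x+y\approx y+x$, $xy\approx yx$, $x+xy\approx x$); $\mathbf{LZ}^{+}$ (resp. $\mathbf{RZ}^{+}$) is the variety of idempotent semirings satisfying $x+y\approx x$ (resp. $x+y\approx y$). For classes $\mathbf{V},\mathbf{W}$ of idempotent semirings, the Mal'cev product $\mathbf{V}\circ\mathbf{W}$ is the class of idempotent semirings $S$ admitting a congruence $\rho$ with $S/\rho\in\mathbf{W}$ and every $\rho$-class (a subsemiring) belonging to $\mathbf{V}$. *)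

From Stdlib Require Import ProofIrrelevance.

(** Idempotent semirings: (S,+) and (S,.) are bands (associative and
    idempotent), both distributive laws hold; + is NOT assumed commutative. *)
Record ISR : Type := {
  car :> Type;
  sadd : car -> car -> car;
  smul : car -> car -> car;
  sadd_assoc : forall x y z, sadd x (sadd y z) = sadd (sadd x y) z;
  smul_assoc : forall x y z, smul x (smul y z) = smul (smul x y) z;
  sadd_idem : forall x, sadd x x = x;
  smul_idem : forall x, smul x x = x;
  smul_addr : forall x y z, smul x (sadd y z) = sadd (smul x y) (smul x z);
  smul_addl : forall x y z, smul (sadd x y) z = sadd (smul x z) (smul y z)
}.

Arguments sadd {i} _ _.
Arguments smul {i} _ _.

Definition ISRClass := ISR -> Prop.

Definition Rect_bullet : ISRClass :=
  fun S => forall x y : S, smul (smul x y) x = x.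
Definition Dlat : ISRClass :=
  fun S => (forall x y : S, sadd x y = sadd y x) /\
           (forall x y : S, smul x y = smul y x) /\
           (forall x y : S, sadd x (smul x y) = x).
Definition LZplus : ISRClass := fun S => forall x y : S, sadd x y = x.
Definition RZplus : ISRClass := fun S => forall x y : S, sadd x y = y.

Record is_congruence (S : ISR) (rho : S -> S -> Prop) : Prop := {
  cong_refl : forall x, rho x x;
  cong_sym : forall x y, rho x y -> rho y x;
  cong_trans : forall x y z, rho x y -> rho y z -> rho x z;
  cong_add : forall x y u v, rho x y -> rho u v -> rho (sadd x u) (sadd y v);
  cong_mul : forall x y u v, rho x y -> rho u v -> rho (smul x u) (smul y v)
}.

Definition is_hom (S T : ISR) (f : S -> T) : Prop :=
  (forall x y : S, f (sadd x y) = sadd (f x) (f y)) /\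
  (forall x y : S, f (smul x y) = smul (f x) (f y)).

(** "S/rho belongs to W": some member of W is the image of a surjective
    homomorphism from S whose kernel is exactly rho (i.e. is isomorphic to
    the quotient S/rho). *)
Definition quotient_in (W : ISRClass) (S : ISR) (rho : S -> S -> Prop) : Prop :=
  exists (T : ISR) (f : S -> T),
    W T /\ is_hom S T f /\ (forall t : T, exists x : S, f x = t) /\
    (forall x y : S, rho x y <-> f x = f y).

Section RhoClass.
Variables (S : ISR) (rho : S -> S -> Prop) (H : is_congruence S rho) (a : S).

Let C := {x : S | rho a x}.

Lemma rc_add_closed (x y : S) : rho a x -> rho a y -> rho a (sadd x y).
Proof. intros hx hy. rewrite <- (sadd_idem S a). now apply (cong_add S rho H). Qed.

Lemma rc_mul_closed (x y : S) : rho a x -> rho a y -> rho a (smul x y).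
Proof. intros hx hy. rewrite <- (smul_idem S a). now apply (cong_mul S rho H). Qed.

Definition rc_add (x y : C) : C :=
  exist _ (sadd (proj1_sig x) (proj1_sig y))
        (rc_add_closed _ _ (proj2_sig x) (proj2_sig y)).
Definition rc_mul (x y : C) : C :=
  exist _ (smul (proj1_sig x) (proj1_sig y))
        (rc_mul_closed _ _ (proj2_sig x) (proj2_sig y)).

Lemma rc_eq (x y : C) : proj1_sig x = proj1_sig y -> x = y.
Proof.
  destruct x as [x hx], y as [y hy]; simpl; intros E; subst y.
  f_equal; apply proof_irrelevance.
Qed.

Definition rho_class : ISR.
Proof.
  refine (@Build_ISR C rc_add rc_mul _ _ _ _ _ _);
    intros; apply rc_eq; simpl.
  - apply sadd_assoc.
  - apply smul_assoc.
  - apply sadd_idem.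
  - apply smul_idem.
  - apply smul_addr.
  - apply smul_addl.
Defined.
End RhoClass.

Definition malcev (V W : ISRClass) : ISRClass :=
  fun S => exists (rho : S -> S -> Prop) (H : is_congruence S rho),
    quotient_in W S rho /\ forall a : S, V (rho_class S rho H a).

(* Under [x + xyx = x], Green's relation D of the multiplicative band (x D y iff xyx = x and
   yxy = y) is compatible with addition as well.  Its classes are rectangular bands, and in the
   quotient multiplication is commutative and [x + xy = x] holds; there + is left regular, so
   Green's relation L of the additive band is a congruence with left-zero classes whose
   quotient is a distributive lattice.  Conversely, the identity holds in every member of
   LZ+ o D (left-zero classes over a lattice), so [x] and [x + xyx] lie in one rectangular
   class, where [x (x + xyx) x = x + xyx] equals [x].  Part (ii) is the additive dual. *)

From Stdlib Require Import ProofIrrelevance FunctionalExtensionality PropExtensionality ClassicalEpsilon.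

Local Infix "⊕" := sadd (at level 50, left associativity).
Local Infix "⊗" := smul (at level 40, left associativity).

Lemma smul_idem_r (S : ISR) (u v : S) : u ⊗ v ⊗ v = u ⊗ v.
Proof. now rewrite <- smul_assoc, smul_idem. Qed.

Lemma smul_idem2 (S : ISR) (x y : S) : x ⊗ y ⊗ x ⊗ y = x ⊗ y.
Proof. now rewrite <- (smul_assoc _ (x ⊗ y)), smul_idem. Qed.

Ltac isr_norm := repeat rewrite ?smul_addl, ?smul_addr, ?smul_assoc, ?smul_idem_r, ?smul_idem, ?sadd_assoc, ?sadd_idem.
Ltac isr_norm_in H := repeat rewrite ?smul_addl, ?smul_addr, ?smul_assoc, ?smul_idem_r, ?smul_idem, ?sadd_assoc, ?sadd_idem in H.

Lemma sadd_square (S : ISR) (a b : S) : a ⊕ b = a ⊕ a ⊗ b ⊕ b ⊗ a ⊕ b.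
Proof. rewrite <- (smul_idem _ (a ⊕ b)) at 1. isr_norm. reflexivity. Qed.

Lemma sadd_square_rev (S : ISR) (a b : S) : a ⊕ b = a ⊕ b ⊗ a ⊕ a ⊗ b ⊕ b.
Proof. rewrite <- (smul_idem _ (a ⊕ b)) at 1. rewrite smul_addr. isr_norm. reflexivity. Qed.

Definition xyx_absorb_l (S : ISR) : Prop := forall x y : S, x ⊕ x ⊗ y ⊗ x = x.
Definition xyx_absorb_r (S : ISR) : Prop := forall x y : S, x ⊗ y ⊗ x ⊕ x = x.

Definition mul_dual (S : ISR) : ISR.
Proof.
  refine (@Build_ISR S (@sadd S) (fun x y => @smul S y x) _ _ _ _ _ _); intros.
  - apply sadd_assoc.
  - symmetry; apply smul_assoc.
  - apply sadd_idem.
  - apply smul_idem.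
  - apply smul_addl.
  - apply smul_addr.
Defined.

Definition add_dual (S : ISR) : ISR.
Proof.
  refine (@Build_ISR S (fun x y => @sadd S y x) (@smul S) _ _ _ _ _ _); intros.
  - symmetry; apply sadd_assoc.
  - apply smul_assoc.
  - apply sadd_idem.
  - apply smul_idem.
  - apply smul_addr.
  - apply smul_addl.
Defined.

Lemma congruence_of_add_dual (S : ISR) (rho : S -> S -> Prop) :
  is_congruence (add_dual S) rho -> is_congruence S rho.
Proof.
  intros [c_refl c_sym c_trans c_add c_mul].
  constructor; auto.
  intros x y u v hxy huv; exact (c_add u v x y huv hxy).
Qed.

Lemma absorb_mul_dual (S : ISR) :
  xyx_absorb_l S -> xyx_absorb_l (mul_dual S).
Proof. intros absorb x y; simpl. rewrite smul_assoc. apply absorb. Qed.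

Section Quotient.
Variables (S : ISR) (rho : S -> S -> Prop) (Hrho : is_congruence S rho).

(* Classes are represented as the predicates [rho x]; [qrep] picks a representative by choice. *)
Definition quot_car := {P : S -> Prop | exists x, P = rho x}.
Definition qclass (x : S) : quot_car := exist _ (rho x) (ex_intro _ x eq_refl).
Definition qrep (c : quot_car) : S :=
  proj1_sig (constructive_indefinite_description _ (proj2_sig c)).

Lemma quot_car_eq (c d : quot_car) : proj1_sig c = proj1_sig d -> c = d.
Proof.
  destruct c as [c hc], d as [d hd]; simpl; intros <-.
  f_equal; apply proof_irrelevance.
Qed.

Lemma qclass_qrep (c : quot_car) : qclass (qrep c) = c.
Proof.
  apply quot_car_eq; unfold qrep; simpl.
  destruct (constructive_indefinite_description _ _); simpl; congruence.
Qed.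

Lemma qclass_eq (x y : S) : qclass x = qclass y <-> rho x y.
Proof.
  split.
  - intros E; apply (f_equal (@proj1_sig _ _)) in E; simpl in E.
    rewrite E; apply (cong_refl S rho Hrho).
  - intros Hxy; apply quot_car_eq; simpl.
    apply functional_extensionality; intros z; apply propositional_extensionality.
    split; intros h.
    + exact (cong_trans S rho Hrho y x z (cong_sym S rho Hrho x y Hxy) h).
    + exact (cong_trans S rho Hrho x y z Hxy h).
Qed.

Lemma rho_qrep (x : S) : rho (qrep (qclass x)) x.
Proof. apply qclass_eq, qclass_qrep. Qed.

Definition qadd (c d : quot_car) : quot_car := qclass (qrep c ⊕ qrep d).
Definition qmul (c d : quot_car) : quot_car := qclass (qrep c ⊗ qrep d).

Lemma qadd_qclass (x y : S) : qadd (qclass x) (qclass y) = qclass (x ⊕ y).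
Proof. apply qclass_eq, (cong_add S rho Hrho); apply rho_qrep. Qed.

Lemma qmul_qclass (x y : S) : qmul (qclass x) (qclass y) = qclass (x ⊗ y).
Proof. apply qclass_eq, (cong_mul S rho Hrho); apply rho_qrep. Qed.

Definition quot : ISR.
Proof.
  refine (@Build_ISR quot_car qadd qmul _ _ _ _ _ _); intros;
    repeat match goal with c : quot_car |- _ =>
      rewrite <- (qclass_qrep c); generalize (qrep c); clear c; intro end;
    repeat rewrite ?qadd_qclass, ?qmul_qclass; f_equal.
  - apply sadd_assoc.
  - apply smul_assoc.
  - apply sadd_idem.
  - apply smul_idem.
  - apply smul_addr.
  - apply smul_addl.
Defined.

Lemma quot_sadd (x y : S) : @sadd quot (qclass x) (qclass y) = qclass (x ⊕ y).
Proof. exact (qadd_qclass x y). Qed.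

Lemma quot_smul (x y : S) : @smul quot (qclass x) (qclass y) = qclass (x ⊗ y).
Proof. exact (qmul_qclass x y). Qed.

Lemma quot_ind2 (P : quot -> quot -> Prop) :
  (forall x y, P (qclass x) (qclass y)) -> forall c d, P c d.
Proof. intros h c d; rewrite <- (qclass_qrep c), <- (qclass_qrep d); apply h. Qed.

Lemma quotient_in_quot (W : ISRClass) : W quot -> quotient_in W S rho.
Proof.
  intros HW; exists quot, qclass; split; [exact HW | split; [split | split]].
  - intros x y; symmetry; apply quot_sadd.
  - intros x y; symmetry; apply quot_smul.
  - intros c; exists (qrep c); apply qclass_qrep.
  - intros x y; symmetry; apply qclass_eq.
Qed.

End Quotient.

Lemma quot_xyx_absorb_l (S : ISR) (rho : S -> S -> Prop) (H : is_congruence S rho) :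
  xyx_absorb_l S -> xyx_absorb_l (quot S rho H).
Proof.
  intros absorb; unfold xyx_absorb_l; apply quot_ind2; intros x y.
  now rewrite !quot_smul, quot_sadd, absorb.
Qed.

Lemma quot_xyx_absorb_r (S : ISR) (rho : S -> S -> Prop) (H : is_congruence S rho) :
  xyx_absorb_r S -> xyx_absorb_r (quot S rho H).
Proof.
  intros absorb; unfold xyx_absorb_r; apply quot_ind2; intros x y.
  now rewrite !quot_smul, quot_sadd, absorb.
Qed.

Section Classes.
Variables (S : ISR) (rho : S -> S -> Prop) (Hrho : is_congruence S rho).

Local Ltac rho_classes_law :=
  split;
  [ intros Hcl u v huv;
    exact (f_equal (@proj1_sig _ _)
             (Hcl u (exist _ u (cong_refl S rho Hrho u)) (exist _ v huv)))
  | intros Hrel a [u hu] [v hv]; apply rc_eq; simpl;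
    apply Hrel, (cong_trans S rho Hrho u a v); [apply (cong_sym S rho Hrho)|]; assumption ].

Lemma rho_classes_Rect_bullet :
  (forall a, Rect_bullet (rho_class S rho Hrho a)) <-> (forall u v, rho u v -> u ⊗ v ⊗ u = u).
Proof. rho_classes_law. Qed.

Lemma rho_classes_LZplus :
  (forall a, LZplus (rho_class S rho Hrho a)) <-> (forall u v, rho u v -> u ⊕ v = u).
Proof. rho_classes_law. Qed.

Lemma rho_classes_RZplus :
  (forall a, RZplus (rho_class S rho Hrho a)) <-> (forall u v, rho u v -> u ⊕ v = v).
Proof. rho_classes_law. Qed.

End Classes.

Section MulBand.
Variable S : ISR.
Implicit Types a b c u v w x y z : S.

Definition jle x y := x ⊗ y ⊗ x = x.

Lemma jle_mid u w v : jle (u ⊗ w ⊗ v) w.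
Proof.
  unfold jle.
  transitivity (u ⊗ (w ⊗ u ⊗ w ⊗ v) ⊗ (w ⊗ u ⊗ w ⊗ v)).
  - rewrite <- (smul_idem _ (u ⊗ w)) at 1. isr_norm. reflexivity.
  - rewrite <- (smul_assoc _ u), smul_idem. isr_norm.
    now rewrite smul_idem2.
Qed.

Lemma jle_trans a b c : jle a b -> jle b c -> jle a c.
Proof.
  unfold jle; intros Hab Hbc.
  assert (Ea : a = a ⊗ b ⊗ c ⊗ (b ⊗ a)).
  { transitivity (a ⊗ (b ⊗ c ⊗ b) ⊗ a); [now rewrite Hbc | isr_norm; reflexivity]. }
  rewrite Ea. apply jle_mid.
Qed.

Lemma jle_mulr a b c : jle a b -> jle (a ⊗ c) (b ⊗ c).
Proof.
  unfold jle; intros Hab. set (X := a ⊗ c).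
  assert (HX : X ⊗ b ⊗ X = X).
  { pose proof (jle_mid a b X) as K; unfold jle in K.
    replace (a ⊗ b ⊗ X) with X in K by (unfold X; isr_norm; now rewrite Hab).
    exact K. }
  (* Insert the square of [c X b], which collapses by idempotency. *)
  transitivity (a ⊗ (c ⊗ X ⊗ b) ⊗ (c ⊗ X ⊗ b) ⊗ X).
  - transitivity (X ⊗ X ⊗ b ⊗ c ⊗ (X ⊗ b ⊗ X)).
    + now rewrite HX, smul_idem; isr_norm.
    + unfold X; isr_norm; reflexivity.
  - rewrite <- (smul_assoc _ a (c ⊗ X ⊗ b)), smul_idem.
    transitivity (X ⊗ X ⊗ b ⊗ X); [unfold X; isr_norm; reflexivity|].
    now rewrite smul_idem.
Qed.

Lemma jle_mulC x y : jle (x ⊗ y) (y ⊗ x).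
Proof. unfold jle; isr_norm; apply smul_idem2. Qed.

End MulBand.

Lemma jle_mull (S : ISR) (a b c : S) : jle S a b -> jle S (c ⊗ a) (c ⊗ b).
Proof.
  unfold jle; intros Hab.
  pose proof (jle_mulr (mul_dual S) a b c) as K; unfold jle in K; simpl in K.
  rewrite !smul_assoc in K. isr_norm. exact (K Hab).
Qed.

Section XYXAbsorption.
Variable S : ISR.
Hypothesis absorb : xyx_absorb_l S.
Implicit Types p q u v w x y z : S.

Lemma absorb_mid x y z : x ⊗ z ⊕ x ⊗ y ⊗ z = x ⊗ z.
Proof.
  (* Take [w = z + x] in [w + w (y z) w = w] and multiply by [x] on the left, [z] on the right. *)
  assert (absorb_l : forall u v w, u ⊗ w ⊕ u ⊗ w ⊗ v ⊗ w = u ⊗ w).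
  { intros u v w. rewrite <- (absorb w v) at 4. isr_norm. reflexivity. }
  pose proof (absorb (z ⊕ x) (y ⊗ z)) as E.
  apply (f_equal (fun t => x ⊗ t ⊗ z)) in E. isr_norm_in E.
  assert (absorb_xz : x ⊗ z ⊕ x ⊗ z ⊗ y ⊗ z ⊗ x ⊗ z = x ⊗ z).
  { pose proof (absorb (x ⊗ z) (y ⊗ z)) as A. isr_norm_in A. exact A. }
  rewrite absorb_l, absorb_xz, <- sadd_assoc, absorb_l in E.
  exact E.
Qed.

Lemma mul_saddr_of_R p q z : p ⊗ q = q -> q ⊗ p = p -> (q ⊕ z) ⊗ (p ⊕ z) = p ⊕ z.
Proof.
  intros Hpq Hqp.
  assert (E : q ⊗ (p ⊕ z) = p ⊗ (p ⊕ z)).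
  { rewrite <- (absorb_mid p (q ⊗ z) (p ⊕ z)).
    rewrite (sadd_square S p z) at 1. isr_norm. now rewrite Hpq, Hqp. }
  now rewrite smul_addl, E, <- smul_addl, smul_idem.
Qed.

Lemma jle_saddl x y z : jle S x y -> jle S (z ⊕ x) (z ⊕ y).
Proof.
  unfold jle; intros Hxy.
  (* Expanding the last factor first puts the summands in an order where the absorption
     laws apply to neighbours. *)
  rewrite (smul_addr _ _ z x). isr_norm.
  rewrite absorb, Hxy.
  rewrite <- (sadd_assoc _ _ (x ⊗ z) (x ⊗ y ⊗ z)), absorb_mid.
  rewrite <- (sadd_assoc _ _ (z ⊗ x) (z ⊗ y ⊗ x)), absorb_mid.
  assert (Hzx : z ⊗ x ⊕ (x ⊗ z ⊗ x ⊕ x) = z ⊗ x ⊕ x).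
  { rewrite (sadd_square S (z ⊗ x) x). isr_norm. reflexivity. }
  rewrite <- !sadd_assoc, Hzx, (sadd_square_rev S z x). isr_norm. reflexivity.
Qed.

End XYXAbsorption.

Lemma mul_saddr_of_L (S : ISR) (p q z : S) :
  xyx_absorb_l S ->
  p ⊗ q = p -> q ⊗ p = q -> (p ⊕ z) ⊗ (q ⊕ z) = p ⊕ z.
Proof.
  intros absorb Hpq Hqp.
  exact (mul_saddr_of_R (mul_dual S) (absorb_mul_dual S absorb) p q z Hqp Hpq).
Qed.

Lemma jle_saddr (S : ISR) (x y z : S) :
  xyx_absorb_l S ->
  jle S x y -> jle S y x -> jle S (x ⊕ z) (y ⊕ z).
Proof.
  unfold jle; intros absorb Hxy Hyx.
  set (u := x ⊕ z); set (v := y ⊕ z); set (w := x ⊗ y ⊕ z).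
  assert (Hwu : w ⊗ u = u).
  { apply (mul_saddr_of_R S absorb); [|exact Hxy]. now rewrite smul_assoc, smul_idem. }
  assert (Hwv : w ⊗ v = w).
  { apply (mul_saddr_of_L S); [exact absorb | apply smul_idem_r |]. now rewrite smul_assoc. }
  (* [u = w v u], and [v u v u = v u] in a band. *)
  assert (Eu : u = w ⊗ v ⊗ u) by now rewrite Hwv, Hwu.
  rewrite Eu at 1. rewrite <- !smul_assoc, (smul_assoc _ v u), smul_idem.
  rewrite !smul_assoc. symmetry. exact Eu.
Qed.

Definition greenD (S : ISR) (x y : S) : Prop := jle S x y /\ jle S y x.

Lemma greenD_congruence (S : ISR) :
  xyx_absorb_l S -> is_congruence S (greenD S).
Proof.
  intros absorb; unfold greenD.
  assert (D_trans : forall x y z : S, greenD S x y -> greenD S y z -> greenD S x z).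
  { intros x y z [] []; split; eapply jle_trans; eassumption. }
  constructor.
  - intros x; split; unfold jle; now rewrite !smul_idem.
  - now intros x y [].
  - exact D_trans.
  - intros x y u v [] []; apply D_trans with (y ⊕ u); split.
    1, 2: apply jle_saddr; assumption.
    1, 2: apply jle_saddl; assumption.
  - intros x y u v [] []; apply D_trans with (y ⊗ u); split.
    1, 2: apply jle_mulr; assumption.
    1, 2: apply jle_mull; assumption.
Qed.

Lemma quot_greenD_smulC (S : ISR) (H : is_congruence S (greenD S)) :
  forall a b : quot S (greenD S) H, a ⊗ b = b ⊗ a.
Proof.
  apply quot_ind2; intros x y.
  rewrite !quot_smul; apply qclass_eq; [exact H|]. split; apply jle_mulC.
Qed.

Section AddLeftRegular.
Variable T : ISR.
Hypothesis sadd_left_regular : forall a b : T, a ⊕ b ⊕ a = a ⊕ b.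

Definition addL (a b : T) : Prop := a ⊕ b = a /\ b ⊕ a = b.

Lemma addL_congruence : is_congruence T addL.
Proof.
  unfold addL.
  assert (L_trans : forall a b c, addL a b -> addL b c -> addL a c).
  { intros a b c [hab hba] [hbc hcb]; split.
    - now rewrite <- hab at 1; rewrite <- sadd_assoc, hbc.
    - now rewrite <- hcb at 1; rewrite <- sadd_assoc, hba. }
  assert (addL_saddr : forall a b c : T, a ⊕ b = a -> a ⊕ c ⊕ (b ⊕ c) = a ⊕ c).
  { intros a b c hab.
    rewrite <- (sadd_assoc _ a c), (sadd_assoc _ c b), sadd_left_regular.
    rewrite <- hab at 1.
    rewrite <- (sadd_assoc _ a b), (sadd_assoc _ b c b), sadd_left_regular.
    now rewrite !sadd_assoc, hab. }
  assert (addL_saddl : forall a b c : T, b ⊕ c = b -> a ⊕ b ⊕ (a ⊕ c) = a ⊕ b).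
  { intros a b c hbc. now rewrite !sadd_assoc, sadd_left_regular, <- sadd_assoc, hbc. }
  constructor.
  - intros a; split; apply sadd_idem.
  - now intros a b [].
  - exact L_trans.
  - intros x y u v [] []; apply L_trans with (y ⊕ u); split; auto.
  - intros x y u v [hxy hyx] [huv hvu]; apply L_trans with (y ⊗ u); split.
    + now rewrite <- smul_addl, hxy.
    + now rewrite <- smul_addl, hyx.
    + now rewrite <- smul_addr, huv.
    + now rewrite <- smul_addr, hvu.
Qed.

Lemma quot_addL_saddC : forall a b : quot T addL addL_congruence, a ⊕ b = b ⊕ a.
Proof.
  apply quot_ind2; intros x y.
  rewrite !quot_sadd; apply qclass_eq; [exact addL_congruence|].
  split.
  - now rewrite sadd_assoc, <- (sadd_assoc _ x y y), sadd_idem, sadd_left_regular.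
  - now rewrite sadd_assoc, <- (sadd_assoc _ y x x), sadd_idem, sadd_left_regular.
Qed.

End AddLeftRegular.

Lemma smulC_sandwich (T : ISR) :
  (forall a b : T, a ⊗ b = b ⊗ a) -> forall a b : T, a ⊗ b ⊗ a = a ⊗ b.
Proof. intros smulC a b. now rewrite <- smul_assoc, (smulC b a), smul_assoc, smul_idem. Qed.

Lemma malcev_LZplus_Dlat_of (T : ISR) :
  (forall a b : T, a ⊗ b = b ⊗ a) -> xyx_absorb_l T ->
  malcev LZplus Dlat T.
Proof.
  intros smulC absorb.
  assert (absorb' : forall a b : T, a ⊕ a ⊗ b = a).
  { intros a b. rewrite <- (smulC_sandwich T smulC). apply absorb. }
  assert (left_regular : forall a b : T, a ⊕ b ⊕ a = a ⊕ b).
  { intros a b. pose proof (absorb' (a ⊕ b) a) as E.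
    now rewrite smul_addl, smul_idem, (smulC b a), absorb' in E. }
  exists (addL T), (addL_congruence T left_regular); split.
  - apply quotient_in_quot with (Hrho := addL_congruence T left_regular); split; [|split].
    + apply quot_addL_saddC.
    + apply quot_ind2; intros x y. now rewrite !quot_smul, smulC.
    + apply quot_ind2; intros x y. now rewrite quot_smul, quot_sadd, absorb'.
  - apply rho_classes_LZplus. now intros u v [].
Qed.

Lemma malcev_RZplus_Dlat_of (T : ISR) :
  (forall a b : T, a ⊗ b = b ⊗ a) -> xyx_absorb_r T ->
  malcev RZplus Dlat T.
Proof.
  intros smulC absorb.
  destruct (malcev_LZplus_Dlat_of (add_dual T) smulC absorb)
    as [rho [H [[U [g [[U_addC [U_mulC U_absorb]] [g_hom [g_surj g_ker]]]]] HL]]].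
  exists rho, (congruence_of_add_dual T rho H); split.
  - exists (add_dual U), g; split; [|split; [|split]].
    + split; [|split]; intros a b; simpl.
      * apply U_addC.
      * apply U_mulC.
      * now rewrite U_addC; apply U_absorb.
    + destruct g_hom as [g_add g_mul]; split; intros a b; [exact (g_add b a) | exact (g_mul a b)].
    + exact g_surj.
    + exact g_ker.
  - apply rho_classes_RZplus. intros u v huv.
    exact (proj1 (rho_classes_LZplus (add_dual T) rho H) HL v u (cong_sym _ _ H u v huv)).
Qed.

Lemma malcev_of_xyx_absorb_l (S : ISR) :
  xyx_absorb_l S -> malcev Rect_bullet (malcev LZplus Dlat) S.
Proof.
  intros absorb. pose proof (greenD_congruence S absorb) as H.
  exists (greenD S), H; split.
  - apply quotient_in_quot with (Hrho := H), malcev_LZplus_Dlat_of.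
    + apply quot_greenD_smulC.
    + now apply quot_xyx_absorb_l.
  - apply rho_classes_Rect_bullet. now intros u v [].
Qed.

Lemma malcev_of_xyx_absorb_r (S : ISR) :
  xyx_absorb_r S -> malcev Rect_bullet (malcev RZplus Dlat) S.
Proof.
  intros absorb.
  assert (H : is_congruence S (greenD S))
    by exact (congruence_of_add_dual S _ (greenD_congruence (add_dual S) absorb)).
  exists (greenD S), H; split.
  - apply quotient_in_quot with (Hrho := H), malcev_RZplus_Dlat_of.
    + apply quot_greenD_smulC.
    + now apply quot_xyx_absorb_r.
  - apply rho_classes_Rect_bullet. now intros u v [].
Qed.

Lemma Dlat_smul_sandwich (U : ISR) : Dlat U -> forall a b : U, a ⊗ b ⊗ a = a ⊗ b.
Proof. intros [_ [smulC _]]; exact (smulC_sandwich U smulC). Qed.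

Lemma malcev_LZplus_Dlat_xyx_absorb_l (T : ISR) :
  malcev LZplus Dlat T -> xyx_absorb_l T.
Proof.
  intros [rho [H [[U [g [HU [[g_add g_mul] [_ g_ker]]]]] HL]]] a b.
  assert (Hab : rho a (a ⊕ a ⊗ b ⊗ a)).
  { apply g_ker. rewrite g_add, !g_mul, Dlat_smul_sandwich by exact HU.
    symmetry; apply HU. }
  pose proof (proj1 (rho_classes_LZplus T rho H) HL _ _ Hab) as E.
  now rewrite sadd_assoc, sadd_idem in E.
Qed.

Lemma malcev_RZplus_Dlat_xyx_absorb_r (T : ISR) :
  malcev RZplus Dlat T -> xyx_absorb_r T.
Proof.
  intros [rho [H [[U [g [HU [[g_add g_mul] [_ g_ker]]]]] HR]]] a b.
  assert (Hab : rho (a ⊗ b ⊗ a ⊕ a) a).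
  { apply g_ker. rewrite g_add, !g_mul, Dlat_smul_sandwich by exact HU.
    destruct HU as [saddC [_ absorb]]. now rewrite saddC, absorb. }
  pose proof (proj1 (rho_classes_RZplus T rho H) HR _ _ Hab) as E.
  now rewrite <- sadd_assoc, sadd_idem in E.
Qed.

Lemma xyx_absorb_l_of_malcev (V : ISRClass) (S : ISR) :
  (forall T, V T -> xyx_absorb_l T) ->
  malcev Rect_bullet V S -> xyx_absorb_l S.
Proof.
  intros hV [rho [H [[T [f [HT [[f_add f_mul] [_ f_ker]]]]] HR]]] x y.
  assert (Hxy : rho x (x ⊕ x ⊗ y ⊗ x)).
  { apply f_ker. rewrite f_add, !f_mul. symmetry; now apply hV. }
  pose proof (proj1 (rho_classes_Rect_bullet S rho H) HR _ _ Hxy) as E.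
  isr_norm_in E. exact E.
Qed.

Lemma xyx_absorb_r_of_malcev (V : ISRClass) (S : ISR) :
  (forall T, V T -> xyx_absorb_r T) ->
  malcev Rect_bullet V S -> xyx_absorb_r S.
Proof.
  intros hV [rho [H [[T [f [HT [[f_add f_mul] [_ f_ker]]]]] HR]]] x y.
  assert (Hxy : rho x (x ⊗ y ⊗ x ⊕ x)).
  { apply f_ker. rewrite f_add, !f_mul. symmetry; now apply hV. }
  pose proof (proj1 (rho_classes_Rect_bullet S rho H) HR _ _ Hxy) as E.
  isr_norm_in E. exact E.
Qed.

Theorem theorem4p3 :
  (forall S : ISR,
     (forall x y : S, sadd x (smul (smul x y) x) = x) <->
     malcev Rect_bullet (malcev LZplus Dlat) S) /\
  (forall S : ISR,
     (forall x y : S, sadd (smul (smul x y) x) x = x) <->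
     malcev Rect_bullet (malcev RZplus Dlat) S).
Proof.
  split; intros S; split.
  - apply malcev_of_xyx_absorb_l.
  - apply xyx_absorb_l_of_malcev, malcev_LZplus_Dlat_xyx_absorb_l.
  - apply malcev_of_xyx_absorb_r.
  - apply xyx_absorb_r_of_malcev, malcev_RZplus_Dlat_xyx_absorb_r.
Qed.
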